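(* Let $R=\prod_{i=1}^m R_i$ be a finite commutative ring which is the direct product of the rings $R_1,\dots,R_m$, let $K\le R^\times$, and let $\mathcal C=\mathrm{Cyc}(K,R)$. For each $i$ let $\varphi_i:R_i^\times\to R^\times$ be the monomorphism such that the $j$th component of $\varphi_i(x)$ is $x$ for $j=i$ and $1_{R_j}$ for $j\ne i$; let $K_i\le R_i^\times$ be defined by $\varphi_i(K_i)=K\cap\varphi_i(R_i^\times)$, and let $\mathcal C_i=\mathrm{Cyc}(K_i,R_i)$. Put $u=0_R$, $v=1_R$, $u_i=0_{R_i}$, $v_i=1_{R_i}$. Then $$\mathrm{Aut}(\mathcal C)_{u,v}=\prod_{i=1}^m \mathrm{Aut}(\mathcal C_i)_{u_i,v_i},$$ where the right-hand side acts on $R=\prod_i R_i$ componentwise. In particular, $\mathcal C$ is normal if and only if $\mathcal C_i$ is normal for every $i$.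
   Context: All rings have an identity. For a finite commutative ring $R$ and a subgroup $K$ of its multiplicative group $R^\times$, the cyclotomic scheme $\mathrm{Cyc}(K,R)$ is the pair $(R,\mathrm{Rel}(K,R))$, where $\mathrm{Rel}(K,R)$ is the set of binary relations $\{(x,y)\in R\times R:\ y-x\in rK\}$, $r\in R$ (these partition $R\times R$). Its automorphism group $\mathrm{Aut}(\mathcal C)$ is the group of all permutations $f$ of $R$ with $S^f=S$ for every $S\in\mathrm{Rel}(K,R)$. For points $a,b$, $\mathrm{Aut}(\mathcal C)_{a,b}$ is the pointwise stabilizer of $a$ and $b$. $\mathrm{A\Gamma L}_1(R)$ is the group of permutations of $R$ of the form $x\mapsto ax^\sigma+b$ with $a\in R^\times$, $b\in R$, $\sigma\in\mathrm{Aut}(R)$ (ring automorphisms). The scheme $\mathcal C$ is called normal if $\mathrm{Aut}(\mathcal C)\le\mathrm{A\Gamma L}_1(R)$. *)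

From HB Require Import structures.
From mathcomp Require Import all_boot all_order all_algebra all_fingroup.
Set Implicit Arguments. Unset Strict Implicit. Unset Printing Implicit Defensive.
Import GRing.Theory.
Local Open Scope ring_scope.

Section Cyc.
Variable R : finComUnitRingType.

Definition coset_rK (K : {set {unit R}}) (r : R) : {set R} :=
  [set r * val k | k in K].

Definition cyc_rel (K : {set {unit R}}) (r : R) : {set R * R} :=
  [set xy : R * R | xy.2 - xy.1 \in coset_rK K r].

Definition AutCyc (K : {set {unit R}}) : {set {perm R}} :=
  [set f : {perm R} | [forall r : R,
      [set (f xy.1, f xy.2) | xy in cyc_rel K r] == cyc_rel K r]].

Definition AutCyc_stab (K : {set {unit R}}) (a b : R) : {set {perm R}} :=
  [set f in AutCyc K | (f a == a) && (f b == b)].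

Definition in_AGammaL (f : {perm R}) : Prop :=
  exists (a : {unit R}) (b : R) (s : {rmorphism R -> R}),
    bijective s /\ forall x, f x = val a * s x + b.

Definition cyc_normal (K : {set {unit R}}) : Prop :=
  forall f, f \in AutCyc K -> in_AGammaL f.
End Cyc.

(* R is the direct product of the R_i via the projections pi_i:
   the map x |-> (pi_i x)_i is a bijection onto prod_i R_i *)
Definition is_direct_product (m : nat) (R : finComUnitRingType)
  (Ri : 'I_m -> finComUnitRingType) (pi : forall i, {rmorphism R -> Ri i}) : Prop :=
  (forall x y : R, (forall i, pi i x = pi i y) -> x = y) /\
  (forall y : (forall i, Ri i), exists x : R, forall i, pi i x = y i).

(* K_i = phi_i^{-1}(K cap phi_i(R_i^x)), where phi_i(x) has i-th component x
   and j-th component 1 for j <> i *)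
Definition Kcomp (m : nat) (R : finComUnitRingType)
  (Ri : 'I_m -> finComUnitRingType) (pi : forall i, {rmorphism R -> Ri i})
  (K : {set {unit R}}) (i : 'I_m) : {set {unit (Ri i)}} :=
  [set x : {unit (Ri i)} | [exists k in K,
      (pi i (val k) == val x) && [forall j : 'I_m, (j != i) ==> (pi j (val k) == 1)]]].

From HB Require Import structures.
From mathcomp Require Import all_boot all_algebra all_fingroup.
Set Implicit Arguments. Unset Strict Implicit. Unset Printing Implicit Defensive.
Import GRing.Theory.
Local Open Scope ring_scope.

(* An automorphism f of Cyc(K,R) moves differences by units: f y - f x lies in
   (y - x)K. Hence f respects the kernel of every projection pi_i and acts
   componentwise; testing it on points equal to 0 and to 1 outside component i
   shows that its i-th component is an automorphism of Cyc(K_i,R_i).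
   Conversely, multipliers from the K_i, each trivial off its own component,
   multiply to a single multiplier in K. For normality, every automorphism is
   x |-> k h(x) + f(0) with h fixing 0 and 1, so Cyc(K,R) is normal exactly when
   all such h are ring automorphisms, a property that is checked componentwise. *)

Section CyclotomicScheme.
Variables (R : finComUnitRingType) (K : {group {unit R}}).

Lemma coset_rKP r x :
  reflect (exists2 k, k \in K & x = r * val k) (x \in coset_rK K r).
Proof. exact: imsetP. Qed.

Lemma AutCycP (f : {perm R}) :
  reflect (forall x y, f y - f x \in coset_rK K (y - x)) (f \in AutCyc K).
Proof.
rewrite inE; apply: (iffP forallP) => [fK x y | fK r].
  suff : (f x, f y) \in cyc_rel K (y - x) by rewrite inE.
  have /eqP <- := fK (y - x); apply/imsetP; exists (x, y) => //.
  by rewrite inE; apply/coset_rKP; exists 1%g; rewrite ?mulr1.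
have f2_inj : injective (fun xy : R * R => (f xy.1, f xy.2)).
  by move=> [x y] [x' y'] [/perm_inj-> /perm_inj->].
rewrite eqEcard card_imset // leqnn andbT.
apply/subsetP => _ /imsetP[[x y] + ->]; rewrite !inE /=.
case/coset_rKP => k Kk yx; case/coset_rKP: (fK x y) => k' Kk' ->.
by apply/coset_rKP; exists (k * k')%g; rewrite ?groupM // yx -mulrA.
Qed.

Lemma AutCyc_stabP (f : {perm R}) a b :
  reflect [/\ f \in AutCyc K, f a = a & f b = b] (f \in AutCyc_stab K a b).
Proof.
rewrite /AutCyc_stab; apply: (iffP setIdP) => [[fK /andP[/eqP fa /eqP fb]] | ] //.
by move=> [fK -> ->]; rewrite !eqxx.
Qed.

Lemma AutCyc_stab1 a b : 1%g \in AutCyc_stab K a b.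
Proof.
apply/AutCyc_stabP; rewrite !perm1; split=> //.
by apply/AutCycP => x y; rewrite !perm1; apply/coset_rKP; exists 1%g; rewrite ?mulr1.
Qed.

Lemma AutCyc_normalize (f : {perm R}) : f \in AutCyc K ->
  exists k : {unit R},
    exists2 h, h \in AutCyc_stab K 0 1 & forall x, f x = val k * h x + f 0.
Proof.
move=> /AutCycP fK; case/coset_rKP: (fK 0 1) => k Kk; rewrite subr0 mul1r => fk.
have kU : val k \is a GRing.unit by exact: valP.
pose h x := (val k)^-1 * (f x - f 0).
have h_inj : injective h.
  by move=> x y /(can_inj (mulVKr kU)) /addIr /perm_inj.
exists k, (perm h_inj) => [|x]; last by rewrite permE mulVKr // subrK.
apply/AutCyc_stabP; rewrite !permE /h subrr mulr0 fk mulVr //; split=> //.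
apply/AutCycP => x y; rewrite !permE /h -mulrBr opprB addrA subrK.
case/coset_rKP: (fK x y) => k' Kk' ->.
apply/coset_rKP; exists (k^-1 * k')%g; first by rewrite groupM ?groupV.
by rewrite mulrCA.
Qed.

Definition stab_ring_morph :=
  forall h, h \in AutCyc_stab K 0 1 ->
    {morph h : x y / x + y} /\ {morph h : x y / x * y}.

Lemma perm_rmorph (h : {perm R}) : {morph h : x y / x + y} ->
  {morph h : x y / x * y} -> h 1 = 1 ->
  exists2 s : {rmorphism R -> R}, bijective s & s =1 h.
Proof.
move=> hD hM h1; have h0 : h 0 = 0 by apply: (addrI (h 0)); rewrite -hD !addr0.
pose s : {rmorphism R -> R} := HB.pack (fun x => h x)
  (GRing.isNmodMorphism.Build R R _ (h0, hD))
  (GRing.isMonoidMorphism.Build R R _ (h1, hM)).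
by exists s => //; apply: (injF_bij (@perm_inj _ h)).
Qed.

Lemma cyc_normalE : cyc_normal K <-> stab_ring_morph.
Proof.
split=> [Knormal h /AutCyc_stabP[hK h0 h1] | Kmorph f /AutCyc_normalize].
  have [a [b [s [_ hE]]]] := Knormal h hK.
  have b0 : b = 0 by move: h0; rewrite hE rmorph0 mulr0 add0r.
  have a1 : val a = 1 by move: h1; rewrite hE rmorph1 mulr1 b0 addr0.
  have hs x : h x = s x by rewrite hE a1 b0 mul1r addr0.
  by split=> x y; rewrite !hs (rmorphD, rmorphM).
move=> [k [h hS fE]]; have [hD hM] := Kmorph h hS.
have [_ _ h1] := AutCyc_stabP _ _ _ hS.
have [s s_bij sE] := perm_rmorph hD hM h1.
by exists k, (f 0), s; split=> // x; rewrite sE.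
Qed.

End CyclotomicScheme.

Section DirectProduct.
Variables (m : nat) (R : finComUnitRingType) (Ri : 'I_m -> finComUnitRingType).
Variable pi : forall i, {rmorphism R -> Ri i}.
Hypothesis Rpi : is_direct_product pi.

Lemma pi_inj x y : (forall i, pi i x = pi i y) -> x = y.
Proof. exact: Rpi.1. Qed.

Definition glue (y : forall i, Ri i) : R :=
  odflt 0 [pick x | [forall i, pi i x == y i]].

Lemma pi_glue y i : pi i (glue y) = y i.
Proof.
rewrite /glue; case: pickP => [x /forallP/(_ i)/eqP // | none].
by have [x xy] := Rpi.2 y; have /forallP[j] := negbT (none x); rewrite xy eqxx.
Qed.

Lemma exists_prod_perm (g : forall i, {perm Ri i}) :
  exists f : {perm R}, forall x i, pi i (f x) = g i (pi i x).
Proof.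
pose f x := glue (fun i => g i (pi i x)).
have f_inj : injective f.
  move=> x y /(congr1 (pi _)) fxy; apply: pi_inj => i.
  by apply: (@perm_inj _ (g i)); have := fxy i; rewrite !pi_glue.
by exists (perm f_inj) => x i; rewrite permE pi_glue.
Qed.

Definition sect i (a : Ri i) : R := glue (dfwith (fun j => 0 : Ri j) a).

Lemma pi_sect i a : pi i (sect a) = a.
Proof. by rewrite pi_glue dfwith_in. Qed.

Variable K : {group {unit R}}.

Lemma KcompP i u : reflect
  (exists2 k, k \in K & pi i (val k) = val u /\ forall j, j != i -> pi j (val k) = 1)
  (u \in Kcomp pi K i).
Proof.
rewrite inE; apply: (iffP exists_inP) => [[k Kk /andP[/eqP ku /forall_inP k1]] | ].
  by exists k => //; split=> // j /k1/eqP.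
by move=> [k Kk [ku k1]]; exists k; rewrite // ku eqxx; apply/forall_inP => j /k1->.
Qed.

Lemma Kcomp_group_set i : group_set (Kcomp pi K i).
Proof.
apply/group_setP; split.
  apply/KcompP; exists 1%g; rewrite ?group1 //= rmorph1.
  by split=> // j _; rewrite rmorph1.
move=> u v /KcompP[k Kk [ku k1]] /KcompP[k' Kk' [k'v k'1]].
apply/KcompP; exists (k * k')%g; rewrite ?groupM //= rmorphM ku k'v; split=> // j ji.
by rewrite rmorphM k1 // k'1 // mulr1.
Qed.

Canonical Kcomp_group i := Group (Kcomp_group_set i).

Lemma Kcomp_pi i k : k \in K -> (forall j, j != i -> pi j (val k) = 1) ->
  exists2 u, u \in Kcomp pi K i & val u = pi i (val k).
Proof.
move=> Kk k1; exists (FinRing.Unit (rmorph_unit (pi i) (valP k))) => //.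
by apply/KcompP; exists k.
Qed.

Lemma AutCyc_pi_eq (f : {perm R}) i x y : f \in AutCyc K ->
  (pi i (f x) == pi i (f y)) = (pi i x == pi i y).
Proof.
move=> /AutCycP/(_ y x)/coset_rKP[k _ fxy].
have kU : pi i (val k) \is a GRing.unit by apply: rmorph_unit; exact: valP.
by rewrite -subr_eq0 -rmorphB fxy rmorphM (mulIr_eq0 _ (mulIr kU)) rmorphB subr_eq0.
Qed.

Lemma AutCyc_component (f : {perm R}) i : f \in AutCyc K ->
  exists g : {perm Ri i}, forall x, pi i (f x) = g (pi i x).
Proof.
move=> fK; pose g (a : Ri i) := pi i (f (sect a)).
have gE x : pi i (f x) = g (pi i x) by apply/eqP; rewrite AutCyc_pi_eq // pi_sect.
have g_inj : injective g.
  move=> a b; rewrite -[a]pi_sect -[b]pi_sect -!gE => /eqP.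
  by rewrite AutCyc_pi_eq // => /eqP.
by exists (perm g_inj) => x; rewrite permE gE.
Qed.

Lemma AutCyc_stab_component (f : {perm R}) i (g : {perm Ri i}) :
  f \in AutCyc_stab K 0 1 -> (forall x, pi i (f x) = g (pi i x)) ->
  g \in AutCyc_stab (Kcomp pi K i) 0 1.
Proof.
move=> /AutCyc_stabP[fK f0 f1] gE.
have pi_fix j x z : f z = z -> pi j x = pi j z -> pi j (f x) = pi j z.
  by move=> fz xz; rewrite -[in RHS]fz; apply/eqP; rewrite AutCyc_pi_eq // xz.
apply/AutCyc_stabP; split; last 2 first.
- by rewrite -(rmorph0 (pi i)) -gE f0.
- by rewrite -(rmorph1 (pi i)) -gE f1.
apply/AutCycP => a b.
(* x and y agree with the fixed points 0 and 1 off component i, which forces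
   the multiplier k to be 1 there. *)
pose x := glue (dfwith (fun j => 0 : Ri j) a).
pose y := glue (dfwith (fun j => 1 : Ri j) b).
have [xi yi] : pi i x = a /\ pi i y = b by rewrite !pi_glue !dfwith_in.
case/coset_rKP: (AutCycP _ _ fK x y) => k Kk fxy.
have k1 j : j != i -> pi j (val k) = 1.
  rewrite eq_sym => ij.
  have xj : pi j x = 0 by rewrite pi_glue dfwith_out.
  have yj : pi j y = 1 by rewrite pi_glue dfwith_out.
  have fxj : pi j (f x) = 0 by rewrite (pi_fix _ _ _ f0) ?xj rmorph0.
  have fyj : pi j (f y) = 1 by rewrite (pi_fix _ _ _ f1) ?yj rmorph1.
  by move/(congr1 (pi j)): fxy; rewrite rmorphM !rmorphB fxj fyj xj yj subr0 mul1r.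
have [u Ku uk] := Kcomp_pi Kk k1.
apply/coset_rKP; exists u => //.
by move/(congr1 (pi i)): fxy; rewrite rmorphM !rmorphB !gE xi yi uk.
Qed.

Lemma AutCyc_stab_of_components (f : {perm R}) (g : forall i, {perm Ri i}) :
  (forall i, g i \in AutCyc_stab (Kcomp pi K i) 0 1) ->
  (forall x i, pi i (f x) = g i (pi i x)) -> f \in AutCyc_stab K 0 1.
Proof.
move=> gS fE; have {}gS i := AutCyc_stabP _ _ _ _ (gS i).
apply/AutCyc_stabP; split; last 2 first.
- by apply: pi_inj => i; rewrite fE rmorph0; case: (gS i).
- by apply: pi_inj => i; rewrite fE rmorph1; case: (gS i).
apply/AutCycP => x y.
have kE i : exists k, [/\ k \in K, pi i (f y - f x) = pi i ((y - x) * val k)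
                        & forall j, j != i -> pi j (val k) = 1].
  have [gK _ _] := gS i.
  case/coset_rKP: (AutCycP _ _ gK (pi i x) (pi i y)) => u /KcompP[k Kk [ku k1]] gxy.
  by exists k; split=> //; rewrite rmorphB !fE gxy rmorphM rmorphB ku.
have [k /all_and3[Kk fk k1]] := fin_all_exists kE.
apply/coset_rKP; exists (\prod_i k i)%g; first exact: group_prod.
apply: pi_inj => i; rewrite fk !rmorphM; congr (_ * _).
rewrite (big_morph val (@FinRing.val_unitM _) (FinRing.val_unit1 _)) rmorph_prod.
by rewrite (bigD1 i) //= big1 ?mulr1 // => j ji; rewrite k1 // eq_sym.
Qed.

Lemma AutCyc_stab_prodP (f : {perm R}) :
  f \in AutCyc_stab K 0 1 <->
  exists g : forall i, {perm Ri i},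
    (forall i, g i \in AutCyc_stab (Kcomp pi K i) 0 1) /\
    (forall x i, pi i (f x) = g i (pi i x)).
Proof.
split=> [fS | [g [gS fE]]]; last exact: AutCyc_stab_of_components gS fE.
have [fK _ _] := AutCyc_stabP _ _ _ _ fS.
have [g fE] := fin_all_exists (fun i => AutCyc_component i fK).
exists g; split=> [i | x i]; last exact: fE.
exact: AutCyc_stab_component fS (fE i).
Qed.

Lemma stab_ring_morph_prod :
  stab_ring_morph K <-> forall i, stab_ring_morph (Kcomp pi K i).
Proof.
split=> [Kmorph i g gS | Kimorph f /AutCyc_stab_prodP[g [gS fE]]].
  have [f fE] := exists_prod_perm (dfwith (fun j => 1%g) g).
  have gE x : g (pi i x) = pi i (f x) by rewrite fE dfwith_in.
  have fS : f \in AutCyc_stab K 0 1.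
    apply: AutCyc_stab_of_components fE => j.
    by case: dfwithP => [|j' _]; rewrite ?AutCyc_stab1.
  have [fD fM] := Kmorph f fS.
  by split=> a b; rewrite -[a]pi_sect -[b]pi_sect -?rmorphD -?rmorphM !gE (fD, fM)
    (rmorphD, rmorphM).
split=> x y; apply: pi_inj => i; have [gD gM] := Kimorph i _ (gS i).
  by rewrite !(fE, rmorphD) gD.
by rewrite !(fE, rmorphM) gM.
Qed.

End DirectProduct.

Theorem theorem1p3 (m : nat) (R : finComUnitRingType)
  (Ri : 'I_m -> finComUnitRingType) (pi : forall i, {rmorphism R -> Ri i})
  (K : {group {unit R}}) :
  is_direct_product pi ->
  (forall f : {perm R},
     f \in AutCyc_stab K 0 1 <->
     exists g : forall i, {perm (Ri i)},
       (forall i, g i \in AutCyc_stab (Kcomp pi K i) 0 1) /\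
       (forall (x : R) (i : 'I_m), pi i (f x) = g i (pi i x)))
  /\
  (cyc_normal K <-> forall i, cyc_normal (Kcomp pi K i)).
Proof.
move=> Rpi; split=> [f | ]; first exact: AutCyc_stab_prodP.
split=> [/cyc_normalE/(stab_ring_morph_prod Rpi) Kmorph i | Kinormal].
  by apply/cyc_normalE; exact: Kmorph.
apply/cyc_normalE/(stab_ring_morph_prod Rpi) => i.
by apply/cyc_normalE; exact: Kinormal.
Qed.
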